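(* The functor $F$ is strong monoidal from the monoidal category $(\mathbf{Perm}\text{-}\mathbf{Nom},\otimes,1)$ to $(\mathbf{Sb}\text{-}\mathbf{Nom},\times,1)$. In particular, for all nominal $\mathrm{Perm}$-sets $X,Y$, the map $p=\langle F(\pi_1),F(\pi_2)\rangle\colon F(X\otimes Y)\to F(X)\times F(Y)$, i.e. $p([m,(x,y)])=([m,x],[m,y])$, is an isomorphism of nominal $\mathrm{Sb}$-sets, natural in $X$ and $Y$.
   Context: Let $\mathbb{A}$ be a countably infinite set of atoms; $\mathrm{Sb}$ is the monoid of functions $\mathbb{A}\to\mathbb{A}$ moving only finitely many atoms (under composition), $\mathrm{Perm}\subseteq\mathrm{Sb}$ the group of bijections in it. For $M\in\{\mathrm{Sb},\mathrm{Perm}\}$, an $M$-set is a set with a monoid action; $C\subseteq\mathbb{A}$ is an $M$-support of $x$ if $m_1|_C=m_2|_C$ implies $m_1x=m_2x$ for $m_1,m_2\in M$; nominal $M$-sets are $M$-sets whose elements all have finite supports; $M\text{-}\mathbf{Nom}$ is the category of nominal $M$-sets with equivariant maps. Products in $M\text{-}\mathbf{Nom}$ are Cartesian products with pointwise action, and $1$ is a singleton. Two elements $x,y$ of nominal $\mathrm{Perm}$-sets are separated, written $x\perp y$, if they have disjoint $\mathrm{Perm}$-supports; the separated product is $X\otimes Y=\{(x,y)\in X\times Y\mid x\perp y\}$ with pointwise action, and $\pi_1,\pi_2$ are the projections. For a nominal $\mathrm{Perm}$-set $X$, $F(X)$ is $\mathrm{Sb}\times X$ modulo the least equivalence relation $\sim$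 containing $(m,gx)\sim(mg,x)$ ($g\in\mathrm{Perm}$) and $(m,x)\sim(m',x)$ whenever $m|_C=m'|_C$ for some $\mathrm{Perm}$-support $C$ of $x$; classes are written $[m,x]$, with action $n\cdot[m,x]=[nm,x]$, and $F(f)([m,x])=[m,f(x)]$. This $F$ is a functor $\mathbf{Perm}\text{-}\mathbf{Nom}\to\mathbf{Sb}\text{-}\mathbf{Nom}$. *)

(* Atoms are modelled by nat (a countably infinite set). *)
From Stdlib Require Import List Relations ProofIrrelevance IndefiniteDescription.
Import ListNotations.

Definition atom := nat.

Definition fin_moving (f : atom -> atom) : Prop :=
  exists l : list atom, forall a, ~ In a l -> f a = a.

Record Sb := mkSb { sb_fun :> atom -> atom; sb_fin : fin_moving sb_fun }.

Lemma fin_moving_id : fin_moving (fun a => a).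
Proof. exists nil; auto. Qed.

Lemma fin_moving_comp f g : fin_moving f -> fin_moving g -> fin_moving (fun a => f (g a)).
Proof.
  intros [l1 H1] [l2 H2]. exists (l1 ++ l2). intros a Ha.
  rewrite H2, H1; auto; intro; apply Ha; apply in_or_app; auto.
Qed.

Definition Sb_id : Sb := mkSb _ fin_moving_id.
Definition Sb_comp (m n : Sb) : Sb :=
  mkSb _ (fin_moving_comp _ _ (sb_fin m) (sb_fin n)).

Definition is_bij (f : atom -> atom) : Prop :=
  exists g, (forall a, g (f a) = a) /\ (forall a, f (g a) = a).

Record Perm := mkPerm { perm_sb :> Sb; perm_bij : is_bij perm_sb }.

Lemma is_bij_id : is_bij (fun a => a).
Proof. exists (fun a => a); split; auto. Qed.

Lemma is_bij_comp f g : is_bij f -> is_bij g -> is_bij (fun a => f (g a)).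
Proof.
  intros [f' [Hf1 Hf2]] [g' [Hg1 Hg2]]. exists (fun a => g' (f' a)).
  split; intros a; [rewrite Hf1; apply Hg1 | rewrite Hg2; apply Hf2].
Qed.

Definition Perm_id : Perm := mkPerm Sb_id is_bij_id.
Definition Perm_comp (g h : Perm) : Perm :=
  mkPerm (Sb_comp g h) (is_bij_comp _ _ (perm_bij g) (perm_bij h)).

Lemma perm_inj (g : Perm) a b : g a = g b -> a = b.
Proof.
  destruct (perm_bij g) as [g' [H1 _]]. intros E.
  rewrite <- (H1 a), <- (H1 b), E. reflexivity.
Qed.

Record PermSet := {
  ps_car :> Type;
  ps_act : Perm -> ps_car -> ps_car;
  ps_act_id : forall x, ps_act Perm_id x = x;
  ps_act_comp : forall g h x, ps_act (Perm_comp g h) x = ps_act g (ps_act h x) }.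

Definition agree_on (C : atom -> Prop) (f g : atom -> atom) : Prop :=
  forall a, C a -> f a = g a.

Definition perm_support (X : PermSet) (C : atom -> Prop) (x : X) : Prop :=
  forall g1 g2 : Perm, agree_on C g1 g2 -> ps_act X g1 x = ps_act X g2 x.

Definition perm_fsupp (X : PermSet) (l : list atom) (x : X) : Prop :=
  perm_support X (fun a => In a l) x.

Definition nominal_perm (X : PermSet) : Prop :=
  forall x : X, exists l, perm_fsupp X l x.

Definition perm_equivariant (X Y : PermSet) (f : X -> Y) : Prop :=
  forall (g : Perm) (x : X), f (ps_act X g x) = ps_act Y g (f x).

Definition separated (X Y : PermSet) (x : X) (y : Y) : Prop :=
  exists l1 l2, perm_fsupp X l1 x /\ perm_fsupp Y l2 y /\
                (forall a, In a l1 -> ~ In a l2).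

Lemma perm_fsupp_act (X : PermSet) (g : Perm) l (x : X) :
  perm_fsupp X l x -> perm_fsupp X (map g l) (ps_act X g x).
Proof.
  intros H h1 h2 Hag.
  rewrite <- !ps_act_comp. apply H. intros a Ha. simpl. apply Hag.
  apply in_map. exact Ha.
Qed.

Lemma separated_act (X Y : PermSet) (g : Perm) (x : X) (y : Y) :
  separated X Y x y -> separated X Y (ps_act X g x) (ps_act Y g y).
Proof.
  intros [l1 [l2 [H1 [H2 Hd]]]]. exists (map g l1), (map g l2).
  split; [|split].
  - apply perm_fsupp_act; auto.
  - apply perm_fsupp_act; auto.
  - intros a Ha Hb. apply in_map_iff in Ha as [a1 [E1 I1]].
    apply in_map_iff in Hb as [a2 [E2 I2]].
    rewrite <- E2 in E1. apply perm_inj in E1. subst. exact (Hd _ I1 I2).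
Qed.

Lemma sig_ext {A : Type} {P : A -> Prop} (u v : sig P) :
  proj1_sig u = proj1_sig v -> u = v.
Proof.
  destruct u as [u Hu], v as [v Hv]; simpl; intros E; subst.
  f_equal; apply proof_irrelevance.
Qed.

Definition tensor_car (X Y : PermSet) : Type :=
  { p : X * Y | separated X Y (fst p) (snd p) }.

Definition tensor_act (X Y : PermSet) (g : Perm) (p : tensor_car X Y) : tensor_car X Y :=
  exist _ (ps_act X g (fst (proj1_sig p)), ps_act Y g (snd (proj1_sig p)))
          (separated_act X Y g _ _ (proj2_sig p)).

Lemma tensor_act_id (X Y : PermSet) p : tensor_act X Y Perm_id p = p.
Proof.
  apply sig_ext. destruct p as [[x y] H]; simpl. rewrite !ps_act_id. reflexivity.
Qed.

Lemma tensor_act_comp (X Y : PermSet) g h p :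
  tensor_act X Y (Perm_comp g h) p = tensor_act X Y g (tensor_act X Y h p).
Proof.
  apply sig_ext. destruct p as [[x y] H]; simpl. rewrite !ps_act_comp. reflexivity.
Qed.

Definition tensor (X Y : PermSet) : PermSet :=
  {| ps_car := tensor_car X Y; ps_act := tensor_act X Y;
     ps_act_id := tensor_act_id X Y; ps_act_comp := tensor_act_comp X Y |}.

Definition pi1 (X Y : PermSet) (p : tensor X Y) : X := fst (proj1_sig p).
Definition pi2 (X Y : PermSet) (p : tensor X Y) : Y := snd (proj1_sig p).

Definition unitPS : PermSet :=
  {| ps_car := unit; ps_act := fun _ x => x;
     ps_act_id := fun _ => eq_refl; ps_act_comp := fun _ _ _ => eq_refl |}.

Lemma perm_fsupp_map (X Y : PermSet) (f : X -> Y) l x :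
  perm_equivariant X Y f -> perm_fsupp X l x -> perm_fsupp Y l (f x).
Proof.
  intros Hf H g1 g2 Hag. rewrite <- !Hf. f_equal. apply H; exact Hag.
Qed.

Lemma separated_map (X X' Y Y' : PermSet) (f : X -> X') (g : Y -> Y') x y :
  perm_equivariant X X' f -> perm_equivariant Y Y' g ->
  separated X Y x y -> separated X' Y' (f x) (g y).
Proof.
  intros Hf Hg [l1 [l2 [H1 [H2 Hd]]]]. exists l1, l2.
  split; [|split]; auto; eapply perm_fsupp_map; eauto.
Qed.

Definition tensor_map (X X' Y Y' : PermSet) (f : X -> X') (g : Y -> Y')
  (Hf : perm_equivariant X X' f) (Hg : perm_equivariant Y Y' g)
  (p : tensor X Y) : tensor X' Y' :=
  exist _ (f (fst (proj1_sig p)), g (snd (proj1_sig p)))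
          (separated_map X X' Y Y' f g _ _ Hf Hg (proj2_sig p)).

(** Equivalence classes are represented
    as predicates on Sb × X (using propositional/functional extensionality
    this is a genuine quotient). *)
Inductive Fgen (X : PermSet) : Sb * X -> Sb * X -> Prop :=
| Fgen_perm : forall (m : Sb) (g : Perm) (x : X),
    Fgen X (m, ps_act X g x) (Sb_comp m g, x)
| Fgen_supp : forall (m m' : Sb) (x : X) (l : list atom),
    perm_fsupp X l x -> agree_on (fun a => In a l) m m' ->
    Fgen X (m, x) (m', x).

Definition Fsim (X : PermSet) : relation (Sb * X) :=
  clos_refl_sym_trans _ (Fgen X).

Definition Fcar (X : PermSet) : Type :=
  { c : Sb * X -> Prop | exists q, c = Fsim X q }.

Definition Fcls (X : PermSet) (q : Sb * X) : Fcar X :=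
  exist _ (Fsim X q) (ex_intro _ q eq_refl).

Definition Frep (X : PermSet) (c : Fcar X) : Sb * X :=
  proj1_sig (constructive_indefinite_description _ (proj2_sig c)).

Definition Fact (X : PermSet) (n : Sb) (c : Fcar X) : Fcar X :=
  Fcls X (Sb_comp n (fst (Frep X c)), snd (Frep X c)).

Definition Fmap (X Y : PermSet) (f : X -> Y) (c : Fcar X) : Fcar Y :=
  Fcls Y (fst (Frep X c), f (snd (Frep X c))).

Definition Fp (X Y : PermSet) (u : Fcar (tensor X Y)) : Fcar X * Fcar Y :=
  (Fmap (tensor X Y) X (pi1 X Y) u, Fmap (tensor X Y) Y (pi2 X Y) u).

Definition Fprod_act (X Y : PermSet) (n : Sb) (v : Fcar X * Fcar Y) : Fcar X * Fcar Y :=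
  (Fact X n (fst v), Fact Y n (snd v)).

From Stdlib Require Import List Relations ProofIrrelevance IndefiniteDescription
  FunctionalExtensionality PropExtensionality Bool Arith Lia.
Import ListNotations.

(* A class [m, x] of F(X) determines x up to a permutation: [m, x] = [m', x'] iff
   x' = g x for some g in Perm with m = m' o g on a finite support of x.  Transitivity of
   this relation is where one needs that finite supports are closed under intersection.
   Injectivity of p: if [m, x] = [m', x'] via g and [m, y] = [m', y'] via h, with x, y and
   x', y' separated, then g on a support of x and h on a support of y glue into a single
   permutation witnessing [m, (x, y)] = [m', (x', y')].
   Surjectivity: given [m, x] and [n, y], rename y apart from x by a permutation r; the
   substitution equal to m on a support of x and to n o r^-1 on a support of r y is a k with
   p [k, (x, r y)] = ([m, x], [n, y]). *)

Lemma Sb_ext (m n : Sb) : (forall a, m a = n a) -> m = n.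
Proof.
  destruct m as [m mfin], n as [n nfin]; simpl; intros E.
  assert (m = n) as <- by (apply functional_extensionality; exact E).
  f_equal; apply proof_irrelevance.
Qed.

Lemma Perm_ext (g h : Perm) : (forall a, g a = h a) -> g = h.
Proof.
  destruct g as [g gbij], h as [h hbij]; simpl; intros E.
  assert (g = h) as <- by (apply Sb_ext; exact E).
  f_equal; apply proof_irrelevance.
Qed.

Definition perm_inv_fun (g : Perm) : atom -> atom :=
  proj1_sig (constructive_indefinite_description _ (perm_bij g)).

Lemma perm_inv_funK (g : Perm) a : perm_inv_fun g (g a) = a.
Proof.
  unfold perm_inv_fun; destruct (constructive_indefinite_description _ _) as [f Hf]; apply Hf.
Qed.

Lemma perm_inv_funKV (g : Perm) a : g (perm_inv_fun g a) = a.
Proof.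
  unfold perm_inv_fun; destruct (constructive_indefinite_description _ _) as [f Hf]; apply Hf.
Qed.

Lemma fin_moving_perm_inv (g : Perm) : fin_moving (perm_inv_fun g).
Proof.
  destruct (sb_fin g) as [l Hl]; exists l; intros a Ha.
  apply (perm_inj g); rewrite perm_inv_funKV; symmetry; apply Hl, Ha.
Qed.

Lemma is_bij_perm_inv (g : Perm) : is_bij (perm_inv_fun g).
Proof. exists g; split; [apply perm_inv_funKV | apply perm_inv_funK]. Qed.

Definition Perm_inv (g : Perm) : Perm :=
  mkPerm (mkSb _ (fin_moving_perm_inv g)) (is_bij_perm_inv g).

Lemma Perm_invK (g : Perm) a : Perm_inv g (g a) = a.
Proof. apply perm_inv_funK. Qed.

Lemma Perm_invKV (g : Perm) a : g (Perm_inv g a) = a.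
Proof. apply perm_inv_funKV. Qed.

Lemma ps_act_invK (X : PermSet) (g : Perm) (x : X) :
  ps_act X (Perm_inv g) (ps_act X g x) = x.
Proof.
  rewrite <- ps_act_comp.
  replace (Perm_comp (Perm_inv g) g) with Perm_id
    by (apply Perm_ext; intros a; symmetry; apply Perm_invK).
  apply ps_act_id.
Qed.

Definition swap_fun (a b c : atom) : atom :=
  if Nat.eqb c a then b else if Nat.eqb c b then a else c.

Lemma swap_funK a b c : swap_fun a b (swap_fun a b c) = c.
Proof.
  unfold swap_fun; destruct (Nat.eqb_spec c a), (Nat.eqb_spec c b);
    repeat (match goal with |- context [Nat.eqb ?x ?y] => destruct (Nat.eqb_spec x y) end; simpl);
    lia.
Qed.

Lemma fin_moving_swap a b : fin_moving (swap_fun a b).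
Proof.
  exists [a; b]; intros c Hc; unfold swap_fun.
  destruct (Nat.eqb_spec c a), (Nat.eqb_spec c b); subst; simpl in Hc; tauto.
Qed.

Definition swap (a b : atom) : Perm :=
  mkPerm (mkSb _ (fin_moving_swap a b))
         (ex_intro _ (swap_fun a b) (conj (swap_funK a b) (swap_funK a b))).

Lemma exists_perm_extending (L : list atom) (f : atom -> atom) :
  (forall a b, In a L -> In b L -> f a = f b -> a = b) ->
  exists k : Perm, forall a, In a L -> k a = f a.
Proof.
  induction L as [|a L IH]; intros f_inj.
  - exists Perm_id; intros a [].
  - destruct IH as [k Hk]; [intros b c Hb Hc; apply f_inj; simpl; auto|].
    destruct (in_dec Nat.eq_dec a L) as [HaL | HaL].
    + exists k; intros c [<- | Hc]; auto.
    + exists (Perm_comp (swap (k a) (f a)) k); intros c Hc.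
      change (swap_fun (k a) (f a) (k c) = f c); unfold swap_fun.
      destruct Hc as [<- | Hc]; [now rewrite Nat.eqb_refl|].
      destruct (Nat.eqb_spec (k c) (k a)) as [E | _].
      { apply perm_inj in E; subst; contradiction. }
      rewrite Hk by exact Hc.
      destruct (Nat.eqb_spec (f c) (f a)) as [E | _]; [|reflexivity].
      apply f_inj in E; simpl; auto; subst; contradiction.
Qed.

Lemma exists_strict_bound (l : list atom) : exists M, forall a, In a l -> a < M.
Proof.
  induction l as [|b l [M HM]]; [exists 0; intros a []|].
  exists (S (max b M)); intros a [<- | Ha]; [lia | specialize (HM a Ha); lia].
Qed.

Lemma exists_perm_shift_off (g : Perm) (p : atom -> bool) (U : list atom) (M : nat) :
  (forall a, In a U -> g a < M) ->
  exists k : Perm, forall a, In a U -> k a = if p a then g a else a + M.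
Proof.
  intros gM; apply exists_perm_extending; intros a b Ha Hb.
  pose proof (gM a Ha); pose proof (gM b Hb).
  destruct (p a), (p b); intros E; [apply (perm_inj g), E | lia | lia | lia].
Qed.

Lemma exists_perm_glue (g h : Perm) (L1 L2 : list atom) :
  (forall a, In a L1 -> ~ In a L2) ->
  (forall a b, In a L1 -> In b L2 -> g a <> h b) ->
  exists k : Perm, agree_on (fun a => In a L1) k g /\ agree_on (fun a => In a L2) k h.
Proof.
  intros disj img_disj.
  destruct (exists_perm_extending (L1 ++ L2)
              (fun a => if in_dec Nat.eq_dec a L1 then g a else h a)) as [k Hk].
  { intros a b Ha Hb; apply in_app_or in Ha, Hb.
    destruct (in_dec Nat.eq_dec a L1) as [a1 | a1], (in_dec Nat.eq_dec b L1) as [b1 | b1];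
      intros E.
    - apply (perm_inj g), E.
    - destruct Hb as [Hb | Hb]; [contradiction | exfalso; exact (img_disj a b a1 Hb E)].
    - destruct Ha as [Ha | Ha]; [contradiction | exfalso; exact (img_disj b a b1 Ha (eq_sym E))].
    - apply (perm_inj h), E. }
  exists k; split; intros a Ha; rewrite Hk by (apply in_or_app; auto);
    destruct in_dec as [Ha1 | Ha1]; auto; [contradiction | exfalso; exact (disj a Ha1 Ha)].
Qed.

Lemma exists_perm_fresh (l s : list atom) :
  exists g : Perm, forall a, In a s -> ~ In (g a) l.
Proof.
  destruct (exists_strict_bound l) as [M HM].
  destruct (exists_perm_extending s (fun a => a + M)) as [g Hg]; [intros; lia|].
  exists g; intros a Ha Hl; rewrite Hg in Hl by exact Ha; specialize (HM _ Hl); lia.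
Qed.

Lemma exists_Sb_glue (m n : Sb) (L1 L2 : list atom) :
  (forall a, In a L1 -> ~ In a L2) ->
  exists k : Sb, agree_on (fun a => In a L1) k m /\ agree_on (fun a => In a L2) k n.
Proof.
  intros disj.
  set (k a := if in_dec Nat.eq_dec a L1 then m a
              else if in_dec Nat.eq_dec a L2 then n a else a).
  assert (kfin : fin_moving k).
  { exists (L1 ++ L2); intros a Ha; unfold k.
    destruct in_dec; [exfalso; apply Ha, in_or_app; auto|].
    destruct in_dec; [exfalso; apply Ha, in_or_app; auto | reflexivity]. }
  exists (mkSb k kfin); split; intros a Ha; simpl; unfold k.
  - destruct in_dec; [reflexivity | contradiction].
  - destruct in_dec as [Ha1 | _]; [exfalso; exact (disj a Ha1 Ha)|].
    destruct in_dec; [reflexivity | contradiction].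
Qed.
Definition memb (l : list atom) (a : atom) : bool :=
  if in_dec Nat.eq_dec a l then true else false.

Lemma membP (l : list atom) a : reflect (In a l) (memb l a).
Proof. unfold memb; destruct in_dec; constructor; assumption. Qed.

Definition inter (l1 l2 : list atom) : list atom := filter (memb l2) l1.

Lemma in_inter (l1 l2 : list atom) a : In a (inter l1 l2) <-> In a l1 /\ In a l2.
Proof.
  unfold inter; rewrite filter_In.
  destruct (membP l2 a); intuition congruence.
Qed.

Lemma perm_fsupp_act_inv (X : PermSet) (g : Perm) l (x : X) :
  perm_fsupp X l (ps_act X g x) -> perm_fsupp X (map (Perm_inv g) l) x.
Proof.
  intros H; rewrite <- (ps_act_invK X g x); apply perm_fsupp_act, H.
Qed.

Lemma perm_fsupp_inter (X : PermSet) (l1 l2 : list atom) (x : X) :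
  perm_fsupp X l1 x -> perm_fsupp X l2 x -> perm_fsupp X (inter l1 l2) x.
Proof.
  intros H1 H2 g1 g2 Hag.
  set (U := l1 ++ l2).
  assert (U1 : forall a, In a l1 -> In a U) by (intros; apply in_or_app; auto).
  assert (U2 : forall a, In a l2 -> In a U) by (intros; apply in_or_app; auto).
  destruct (exists_strict_bound (map g1 U ++ map g2 U)) as [M HM].
  assert (g1M : forall a, In a U -> g1 a < M)
    by (intros; apply HM, in_or_app; left; apply in_map; auto).
  assert (g2M : forall a, In a U -> g2 a < M)
    by (intros; apply HM, in_or_app; right; apply in_map; auto).
  (* g1 x = k1 x = k x = k2 x = g2 x, using alternately the supports l1, l2, l1, l2. *)
  destruct (exists_perm_shift_off g1 (memb l1) U M g1M) as [k1 Hk1].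
  destruct (exists_perm_shift_off g1 (fun a => memb l1 a && memb l2 a) U M g1M) as [k Hk].
  destruct (exists_perm_shift_off g2 (memb l2) U M g2M) as [k2 Hk2].
  transitivity (ps_act X k1 x); [|transitivity (ps_act X k x); [|transitivity (ps_act X k2 x)]].
  - apply H1; intros a Ha; rewrite Hk1 by auto.
    destruct (membP l1 a); [reflexivity | contradiction].
  - apply H2; intros a Ha; rewrite Hk1, Hk by auto.
    destruct (membP l1 a), (membP l2 a); reflexivity || contradiction.
  - apply H1; intros a Ha; rewrite Hk, Hk2 by auto.
    destruct (membP l1 a), (membP l2 a); simpl; try contradiction; [|reflexivity].
    apply Hag, in_inter; auto.
  - apply H2; intros a Ha; rewrite Hk2 by auto.
    destruct (membP l2 a); [reflexivity | contradiction].
Qed.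

Lemma perm_fsupp_inter_preimage (X : PermSet) (g : Perm) (x : X) l t :
  perm_fsupp X l x -> perm_fsupp X t (ps_act X g x) ->
  exists L, perm_fsupp X L x /\ forall a, In a L -> In a l /\ In (g a) t.
Proof.
  intros Hl Ht; exists (inter l (map (Perm_inv g) t)); split.
  - apply perm_fsupp_inter; [exact Hl | apply perm_fsupp_act_inv, Ht].
  - intros a Ha; apply in_inter in Ha as [Ha Hb].
    apply in_map_iff in Hb as [b [<- Hb]]; rewrite Perm_invKV; auto.
Qed.

Lemma perm_fsupp_tensor (X Y : PermSet) (w : tensor X Y) l1 l2 :
  perm_fsupp X l1 (pi1 X Y w) -> perm_fsupp Y l2 (pi2 X Y w) ->
  perm_fsupp (tensor X Y) (l1 ++ l2) w.
Proof.
  intros H1 H2 g1 g2 Hag; apply sig_ext; simpl; f_equal;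
    [apply H1 | apply H2]; intros a Ha; apply Hag, in_or_app; auto.
Qed.

Lemma Fcls_eqP (X : PermSet) q q' : Fcls X q = Fcls X q' <-> Fsim X q q'.
Proof.
  split; intros H.
  - apply (f_equal (@proj1_sig _ _)) in H; simpl in H; rewrite H; apply rst_refl.
  - apply sig_ext; simpl; apply functional_extensionality; intros r.
    apply propositional_extensionality; split; intros H'.
    + eapply rst_trans; [apply rst_sym, H | exact H'].
    + eapply rst_trans; [exact H | exact H'].
Qed.

Lemma Fcls_Frep (X : PermSet) (c : Fcar X) : Fcls X (Frep X c) = c.
Proof.
  destruct c as [c Hc]; apply sig_ext; unfold Frep; simpl.
  destruct (constructive_indefinite_description _ Hc) as [q Hq]; simpl; symmetry; exact Hq.
Qed.

Lemma Fcls_surj (X : PermSet) (c : Fcar X) : exists q, c = Fcls X q.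
Proof. exists (Frep X c); symmetry; apply Fcls_Frep. Qed.

Lemma Fsim_minimal (X : PermSet) (R : relation (Sb * X)) :
  reflexive _ R -> symmetric _ R -> transitive _ R -> inclusion _ (Fgen X) R ->
  inclusion _ (Fsim X) R.
Proof. intros Rrefl Rsym Rtrans Rgen q q' H; induction H; eauto. Qed.

Lemma Fsim_morph (X Y : PermSet) (phi : Sb * X -> Sb * Y) :
  (forall q q', Fgen X q q' -> Fsim Y (phi q) (phi q')) ->
  forall q q', Fsim X q q' -> Fsim Y (phi q) (phi q').
Proof.
  intros Hgen; apply Fsim_minimal; auto.
  - intros q; apply rst_refl.
  - intros q q'; apply rst_sym.
  - intros q1 q2 q3; apply rst_trans.
Qed.

Lemma Fmap_cls (X Y : PermSet) (f : X -> Y) q :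
  perm_equivariant X Y f -> Fmap X Y f (Fcls X q) = Fcls Y (fst q, f (snd q)).
Proof.
  intros Hf; unfold Fmap; apply Fcls_eqP.
  apply (Fsim_morph X Y (fun q => (fst q, f (snd q)))); [|apply Fcls_eqP, Fcls_Frep].
  intros q1 q2 G; apply rst_step; destruct G as [m g x | m m' x l Hl Ha]; simpl.
  - rewrite Hf; apply Fgen_perm.
  - eapply Fgen_supp; [apply perm_fsupp_map; eauto | exact Ha].
Qed.

Lemma Fact_cls (X : PermSet) (n : Sb) q :
  Fact X n (Fcls X q) = Fcls X (Sb_comp n (fst q), snd q).
Proof.
  unfold Fact; apply Fcls_eqP.
  apply (Fsim_morph X X (fun q => (Sb_comp n (fst q), snd q))); [|apply Fcls_eqP, Fcls_Frep].
  intros q1 q2 G; apply rst_step; destruct G as [m g x | m m' x l Hl Ha]; simpl.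
  - replace (Sb_comp n (Sb_comp m g)) with (Sb_comp (Sb_comp n m) g)
      by (apply Sb_ext; reflexivity).
    apply Fgen_perm.
  - eapply Fgen_supp; [exact Hl|]; intros a Ha'; simpl; rewrite Ha; auto.
Qed.

Lemma pi1_equivariant (X Y : PermSet) : perm_equivariant (tensor X Y) X (pi1 X Y).
Proof. intros g w; reflexivity. Qed.

Lemma pi2_equivariant (X Y : PermSet) : perm_equivariant (tensor X Y) Y (pi2 X Y).
Proof. intros g w; reflexivity. Qed.

Lemma Fp_cls (X Y : PermSet) (m : Sb) (w : tensor X Y) :
  Fp X Y (Fcls (tensor X Y) (m, w)) = (Fcls X (m, pi1 X Y w), Fcls Y (m, pi2 X Y w)).
Proof.
  unfold Fp; rewrite !Fmap_cls by (apply pi1_equivariant || apply pi2_equivariant).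
  reflexivity.
Qed.

Definition Frel (X : PermSet) (q q' : Sb * X) : Prop :=
  exists (g : Perm) (l : list atom),
    perm_fsupp X l (snd q) /\ snd q' = ps_act X g (snd q) /\
    agree_on (fun a => In a l) (fst q) (fun a => fst q' (g a)).

Section Frel_equivalence.

Variable X : PermSet.
Hypothesis X_nominal : nominal_perm X.

Lemma Frel_refl : reflexive _ (Frel X).
Proof.
  intros [m x]; destruct (X_nominal x) as [l Hl].
  exists Perm_id, l; cbn [fst snd]; repeat split; auto; symmetry; apply ps_act_id.
Qed.

Lemma Frel_sym : symmetric _ (Frel X).
Proof.
  intros [m x] [m' x'] [g [l [Hl [E Hm]]]]; simpl in *; subst x'.
  exists (Perm_inv g), (map g l); cbn [fst snd]; repeat split.
  - apply perm_fsupp_act, Hl.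
  - symmetry; apply ps_act_invK.
  - intros b Hb; apply in_map_iff in Hb as [a [<- Ha]]; rewrite Perm_invK; symmetry; auto.
Qed.

Lemma Frel_trans : transitive _ (Frel X).
Proof.
  intros [m x] [m' x'] [m'' x''] [g [l [Hl [E Hm]]]] [h [l' [Hl' [E' Hm']]]]; simpl in *.
  subst x' x''.
  destruct (perm_fsupp_inter_preimage X g x l l' Hl Hl') as [L [HL HLl]].
  exists (Perm_comp h g), L; cbn [fst snd]; repeat split; [exact HL | symmetry; apply ps_act_comp|].
  intros a Ha; destruct (HLl a Ha); rewrite Hm by auto; apply Hm'; auto.
Qed.

Lemma Fgen_Frel : inclusion _ (Fgen X) (Frel X).
Proof.
  intros q q' [m g x | m m' x l Hl Ha].
  - destruct (X_nominal (ps_act X g x)) as [l Hl].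
    exists (Perm_inv g), l; cbn [fst snd]; repeat split; auto.
    + symmetry; apply ps_act_invK.
    + intros a _; change (m a = m (g (Perm_inv g a))); rewrite Perm_invKV; reflexivity.
  - exists Perm_id, l; cbn [fst snd]; repeat split; auto; symmetry; apply ps_act_id.
Qed.

Lemma Frel_Fsim q q' : Frel X q q' -> Fsim X q q'.
Proof.
  destruct q as [m x], q' as [m' x']; intros [g [l [Hl [E Hm]]]]; simpl in *; subst x'.
  apply rst_trans with (Sb_comp m' g, x).
  - apply rst_step; eapply Fgen_supp; [exact Hl | exact Hm].
  - apply rst_sym, rst_step, Fgen_perm.
Qed.

Lemma Fcls_eq_Frel q q' : Fcls X q = Fcls X q' <-> Frel X q q'.
Proof.
  rewrite Fcls_eqP; split; [|apply Frel_Fsim].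
  apply Fsim_minimal; [exact Frel_refl | exact Frel_sym | exact Frel_trans | exact Fgen_Frel].
Qed.

End Frel_equivalence.

Lemma Fp_Fact (X Y : PermSet) (n : Sb) (u : Fcar (tensor X Y)) :
  Fp X Y (Fact (tensor X Y) n u) = Fprod_act X Y n (Fp X Y u).
Proof.
  destruct (Fcls_surj _ u) as [[m w] ->].
  unfold Fprod_act; rewrite Fact_cls, !Fp_cls; cbn [fst snd]; rewrite !Fact_cls; reflexivity.
Qed.

Lemma Fp_injective (X Y : PermSet) : nominal_perm X -> nominal_perm Y ->
  forall u u', Fp X Y u = Fp X Y u' -> u = u'.
Proof.
  intros HX HY u u' E.
  destruct (Fcls_surj _ u) as [[m w] ->], (Fcls_surj _ u') as [[m' w'] ->].
  rewrite !Fp_cls in E.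
  assert (Ex := f_equal fst E); assert (Ey := f_equal snd E); cbn [fst snd] in Ex, Ey.
  apply Fcls_eq_Frel in Ex as [g [l1 [Hl1 [Ex Hm1]]]]; [|exact HX].
  apply Fcls_eq_Frel in Ey as [h [l2 [Hl2 [Ey Hm2]]]]; [|exact HY].
  destruct w as [[x y] sep], w' as [[x' y'] sep']; unfold pi1, pi2 in *; simpl in *.
  subst x' y'.
  destruct sep as [s1 [s2 [Hs1 [Hs2 Hd]]]], sep' as [t1 [t2 [Ht1 [Ht2 Hd']]]].
  destruct (perm_fsupp_inter_preimage X g x (inter l1 s1) t1) as [L1 [HL1 P1]];
    [apply perm_fsupp_inter; assumption | assumption |].
  destruct (perm_fsupp_inter_preimage Y h y (inter l2 s2) t2) as [L2 [HL2 P2]];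
    [apply perm_fsupp_inter; assumption | assumption |].
  setoid_rewrite in_inter in P1; setoid_rewrite in_inter in P2.
  destruct (exists_perm_glue g h L1 L2) as [k [Hk1 Hk2]].
  { intros a Ha1 Ha2; apply (Hd a); [apply P1 | apply P2]; assumption. }
  { intros a b Ha Hb Eab; apply (Hd' (g a)); [apply P1 | rewrite Eab; apply P2]; assumption. }
  apply Fcls_eqP, Frel_Fsim.
  exists k, (L1 ++ L2); cbn [fst snd]; repeat split.
  - apply perm_fsupp_tensor; assumption.
  - apply sig_ext; simpl; f_equal; [apply HL1 | apply HL2]; intros a Ha; symmetry; auto.
  - intros a Ha; apply in_app_or in Ha as [Ha | Ha].
    + rewrite Hk1 by exact Ha; apply Hm1, P1, Ha.
    + rewrite Hk2 by exact Ha; apply Hm2, P2, Ha.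
Qed.

Lemma Fp_surjective (X Y : PermSet) : nominal_perm X -> nominal_perm Y ->
  forall v, exists u, Fp X Y u = v.
Proof.
  intros HX HY [c1 c2].
  destruct (Fcls_surj _ c1) as [[m x] ->], (Fcls_surj _ c2) as [[n y] ->].
  destruct (HX x) as [s1 Hs1], (HY y) as [s2 Hs2].
  destruct (exists_perm_fresh s1 s2) as [r Hr].
  assert (sep : separated X Y x (ps_act Y r y)).
  { exists s1, (map r s2); repeat split; [exact Hs1 | apply perm_fsupp_act, Hs2|].
    intros a Ha Hb; apply in_map_iff in Hb as [b [<- Hb]]; exact (Hr b Hb Ha). }
  destruct (exists_Sb_glue m (Sb_comp n (Perm_inv r)) s1 (map r s2)) as [k [Hk1 Hk2]].
  { intros a Ha Hb; apply in_map_iff in Hb as [b [<- Hb]]; exact (Hr b Hb Ha). }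
  exists (Fcls (tensor X Y) (k, exist _ (x, ps_act Y r y) sep)).
  rewrite Fp_cls; unfold pi1, pi2; simpl; f_equal; apply Fcls_eqP.
  - apply rst_step; eapply Fgen_supp; [exact Hs1 | exact Hk1].
  - apply rst_trans with (Sb_comp k r, y); [apply rst_step, Fgen_perm|].
    apply rst_step; eapply Fgen_supp; [exact Hs2|]; intros a Ha.
    change (k (r a) = n a); rewrite Hk2 by (apply in_map, Ha).
    change (n (Perm_inv r (r a)) = n a); rewrite Perm_invK; reflexivity.
Qed.

Lemma Fp_invertible (X Y : PermSet) : nominal_perm X -> nominal_perm Y ->
  exists q : Fcar X * Fcar Y -> Fcar (tensor X Y),
    (forall u, q (Fp X Y u) = u) /\ (forall v, Fp X Y (q v) = v).
Proof.
  intros HX HY.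
  set (q v := proj1_sig (constructive_indefinite_description _ (Fp_surjective X Y HX HY v))).
  assert (Fp_q : forall v, Fp X Y (q v) = v)
    by (intros v; unfold q; destruct constructive_indefinite_description; assumption).
  exists q; split; [|exact Fp_q].
  intros u; apply (Fp_injective X Y HX HY), Fp_q.
Qed.

Lemma Fcls_unit (c : Fcar unitPS) : c = Fcls unitPS (Sb_id, tt).
Proof.
  destruct (Fcls_surj _ c) as [[m []] ->]; apply Fcls_eqP, rst_step.
  apply Fgen_supp with (l := []); [intros g1 g2 _; reflexivity | intros a []].
Qed.

Lemma tensor_map_equivariant (X X' Y Y' : PermSet) (f : X -> X') (g : Y -> Y')
  (Hf : perm_equivariant X X' f) (Hg : perm_equivariant Y Y' g) :
  perm_equivariant (tensor X Y) (tensor X' Y') (tensor_map X X' Y Y' f g Hf Hg).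
Proof. intros h w; apply sig_ext; simpl; rewrite Hf, Hg; reflexivity. Qed.

Lemma Fp_natural (X X' Y Y' : PermSet) (f : X -> X') (g : Y -> Y')
  (Hf : perm_equivariant X X' f) (Hg : perm_equivariant Y Y' g) (u : Fcar (tensor X Y)) :
  Fp X' Y' (Fmap (tensor X Y) (tensor X' Y') (tensor_map X X' Y Y' f g Hf Hg) u) =
  (Fmap X X' f (fst (Fp X Y u)), Fmap Y Y' g (snd (Fp X Y u))).
Proof.
  destruct (Fcls_surj _ u) as [[m w] ->].
  rewrite Fmap_cls by apply tensor_map_equivariant; cbn [fst snd].
  rewrite !Fp_cls; cbn [fst snd]; rewrite !Fmap_cls by assumption; reflexivity.
Qed.

Theorem mainTheorem2 :
  (* unit: F(1) ≅ 1, i.e. F(1) is a singleton *)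
  (exists c0 : Fcar unitPS, forall c : Fcar unitPS, c = c0) /\
  (* p is given by p([m,(x,y)]) = ([m,x],[m,y]) and is an isomorphism of
     Sb-sets (an Sb-equivariant bijection) *)
  (forall X Y : PermSet, nominal_perm X -> nominal_perm Y ->
     (forall (m : Sb) (w : tensor X Y),
        Fp X Y (Fcls (tensor X Y) (m, w)) =
        (Fcls X (m, pi1 X Y w), Fcls Y (m, pi2 X Y w))) /\
     (forall (n : Sb) (u : Fcar (tensor X Y)),
        Fp X Y (Fact (tensor X Y) n u) = Fprod_act X Y n (Fp X Y u)) /\
     (exists q : Fcar X * Fcar Y -> Fcar (tensor X Y),
        (forall u, q (Fp X Y u) = u) /\ (forall v, Fp X Y (q v) = v))) /\
  (* naturality in X and Y *)
  (forall (X X' Y Y' : PermSet) (f : X -> X') (g : Y -> Y')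
          (Hf : perm_equivariant X X' f) (Hg : perm_equivariant Y Y' g),
     nominal_perm X -> nominal_perm X' -> nominal_perm Y -> nominal_perm Y' ->
     forall u : Fcar (tensor X Y),
       Fp X' Y' (Fmap (tensor X Y) (tensor X' Y') (tensor_map X X' Y Y' f g Hf Hg) u) =
       (Fmap X X' f (fst (Fp X Y u)), Fmap Y Y' g (snd (Fp X Y u)))) /\
  (* associativity coherence: F(α) relates [m,((x,y),z)] and [m,(x,(y,z))] *)
  (forall (X Y Z : PermSet), nominal_perm X -> nominal_perm Y -> nominal_perm Z ->
     forall (m : Sb) (x : X) (y : Y) (z : Z)
       (hxy : separated X Y x y)
       (hxy_z : separated (tensor X Y) Z (exist _ (x, y) hxy) z)
       (hyz : separated Y Z y z)
       (hx_yz : separated X (tensor Y Z) x (exist _ (y, z) hyz)),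
     let u := Fcls (tensor (tensor X Y) Z) (m, exist _ (exist _ (x, y) hxy, z) hxy_z) in
     let v := Fcls (tensor X (tensor Y Z)) (m, exist _ (x, exist _ (y, z) hyz) hx_yz) in
     fst (Fp X Y (fst (Fp (tensor X Y) Z u))) = fst (Fp X (tensor Y Z) v) /\
     snd (Fp X Y (fst (Fp (tensor X Y) Z u))) = fst (Fp Y Z (snd (Fp X (tensor Y Z) v))) /\
     snd (Fp (tensor X Y) Z u) = snd (Fp Y Z (snd (Fp X (tensor Y Z) v)))) /\
  (* unit coherence: the unitors X⊗1 -> X, 1⊗X -> X are the projections *)
  (forall X : PermSet, nominal_perm X ->
     (forall u : Fcar (tensor X unitPS),
        fst (Fp X unitPS u) = Fmap (tensor X unitPS) X (pi1 X unitPS) u) /\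
     (forall u : Fcar (tensor unitPS X),
        snd (Fp unitPS X u) = Fmap (tensor unitPS X) X (pi2 unitPS X) u)).
Proof.
  split; [|split; [|split; [|split]]].
  - exists (Fcls unitPS (Sb_id, tt)); exact Fcls_unit.
  - intros X Y HX HY; split; [exact (Fp_cls X Y) | split].
    + exact (Fp_Fact X Y).
    + exact (Fp_invertible X Y HX HY).
  - intros; apply Fp_natural.
  - intros; subst u v; rewrite !Fp_cls; cbn [fst snd]; rewrite !Fp_cls; auto.
  - intros X _; split; reflexivity.
Qed.
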